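(* Let $\mathbf K$ be an M$\Delta$C generated as a thick subcategory by a single object $G$, and assume that every object of $\mathbf K$ is left dualizable or that every object of $\mathbf K$ is right dualizable. Then $\operatorname{Spc}\mathbf K$ is a Noetherian topological space if and only if the finitely generated thick ideals of $\mathbf K$ satisfy the descending chain condition.
   Context: M$\Delta$C: triangulated category with monoidal structure $(\otimes,\mathbf 1)$, $\otimes$ exact in each variable. Thick ideal: full triangulated subcategory closed under summands and two-sided tensoring; finitely generated thick ideal: $\langle A_1,\dots,A_n\rangle$, the smallest thick ideal containing finitely many objects. Prime ideal: proper thick ideal $\mathbf P$ with $\mathbf I\otimes\mathbf J\subseteq\mathbf P\Rightarrow\mathbf I\subseteq\mathbf P$ or $\mathbf J\subseteq\mathbf P$. $\operatorname{Spc}\mathbf K$: set of primes with closed sets the intersections of $V(A)=\{\mathbf P:A\notin\mathbf P\}$. *)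

From mathcomp Require Import all_boot all_order all_algebra.
Set Implicit Arguments. Unset Strict Implicit. Unset Printing Implicit Defensive.
Import GRing.Theory.
Local Open Scope ring_scope.

Record MDCData := {
  obj : Type;
  hom : obj -> obj -> zmodType;
  idm : forall A, hom A A;
  comp : forall A B C, hom B C -> hom A B -> hom A C;
  sh : obj -> obj;
  shm : forall A B, hom A B -> hom (sh A) (sh B);
  dist : forall X Y Z, hom X Y -> hom Y Z -> hom Z (sh X) -> Prop;
  tens : obj -> obj -> obj;
  tensm : forall A A' B B', hom A A' -> hom B B' -> hom (tens A B) (tens A' B');
  unit : obj;
  assoc : forall A B C, hom (tens (tens A B) C) (tens A (tens B C));
  associ : forall A B C, hom (tens A (tens B C)) (tens (tens A B) C);
  lunit : forall A, hom (tens unit A) A;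
  luniti : forall A, hom A (tens unit A);
  runit : forall A, hom (tens A unit) A;
  runiti : forall A, hom A (tens A unit)
}.

Arguments hom {_} _ _.
Arguments idm {_} _.
Arguments comp {_ _ _ _} _ _.
Arguments sh {_} _.
Arguments shm {_ _ _} _.
Arguments dist {_ _ _ _} _ _ _.
Arguments tens {_} _ _.
Arguments tensm {_ _ _ _ _} _ _.
Arguments unit {_}.
Arguments assoc {_} _ _ _.
Arguments associ {_} _ _ _.
Arguments lunit {_} _.
Arguments luniti {_} _.
Arguments runit {_} _.
Arguments runiti {_} _.

Notation "g \oc f" := (comp g f) (at level 40, left associativity).

Section MDCDefs.
Variable K : MDCData.
Local Notation obj := (obj K).

Definition is_iso (A B : obj) (f : hom A B) : Prop :=
  exists g : hom B A, g \oc f = idm A /\ f \oc g = idm B.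

Definition is_zero_obj (Z : obj) : Prop := idm Z = 0.

Definition is_biproduct (X A B : obj) : Prop :=
  exists (i1 : hom A X) (p1 : hom X A) (i2 : hom B X) (p2 : hom X B),
    [/\ p1 \oc i1 = idm A, p2 \oc i2 = idm B, p1 \oc i2 = 0, p2 \oc i1 = 0
      & i1 \oc p1 + i2 \oc p2 = idm X].

Definition preadditive_axioms : Prop :=
  [/\ (forall (A B C D : obj) (h : hom C D) (g : hom B C) (f : hom A B),
         h \oc (g \oc f) = (h \oc g) \oc f),
      (forall (A B : obj) (f : hom A B), idm B \oc f = f),
      (forall (A B : obj) (f : hom A B), f \oc idm A = f),
      (forall (A B C : obj) (g g' : hom B C) (f : hom A B),
         (g + g') \oc f = g \oc f + g' \oc f)
    & (forall (A B C : obj) (g : hom B C) (f f' : hom A B),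
         g \oc (f + f') = g \oc f + g \oc f')].

Definition additive_axioms : Prop :=
  (exists Z : obj, is_zero_obj Z) /\ (forall A B : obj, exists X, is_biproduct X A B).

Definition shift_axioms : Prop :=
  [/\ (forall A : obj, shm (idm A) = idm (sh A)),
      (forall (A B C : obj) (g : hom B C) (f : hom A B), shm (g \oc f) = shm g \oc shm f),
      (forall (A B : obj) (f f' : hom A B), shm (f + f') = shm f + shm f'),
      (forall A B : obj, bijective (@shm K A B))
    & (forall Y : obj, exists (X : obj) (f : hom (sh X) Y), is_iso f)].

Definition tri_iso (X Y Z : obj) (f : hom X Y) (g : hom Y Z) (h : hom Z (sh X))
    (X' Y' Z' : obj) (f' : hom X' Y') (g' : hom Y' Z') (h' : hom Z' (sh X')) : Prop :=
  exists (a : hom X X') (b : hom Y Y') (c : hom Z Z'),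
    [/\ is_iso a, is_iso b, is_iso c &
        [/\ b \oc f = f' \oc a, c \oc g = g' \oc b & shm a \oc h = h' \oc c]].

Definition TR1 : Prop :=
  [/\ (forall (X Z : obj), is_zero_obj Z -> dist (idm X) (0 : hom X Z) (0 : hom Z (sh X))),
      (forall (X Y Z : obj) (f : hom X Y) (g : hom Y Z) (h : hom Z (sh X))
              (X' Y' Z' : obj) (f' : hom X' Y') (g' : hom Y' Z') (h' : hom Z' (sh X')),
         dist f g h -> tri_iso f g h f' g' h' -> dist f' g' h')
    & (forall (X Y : obj) (f : hom X Y),
         exists (Z : obj) (g : hom Y Z) (h : hom Z (sh X)), dist f g h)].

Definition TR2 : Prop :=
  forall (X Y Z : obj) (f : hom X Y) (g : hom Y Z) (h : hom Z (sh X)),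
    dist f g h <-> dist g h (- shm f).

Definition TR3 : Prop :=
  forall (X Y Z : obj) (f : hom X Y) (g : hom Y Z) (h : hom Z (sh X))
         (X' Y' Z' : obj) (f' : hom X' Y') (g' : hom Y' Z') (h' : hom Z' (sh X'))
         (a : hom X X') (b : hom Y Y'),
    dist f g h -> dist f' g' h' -> b \oc f = f' \oc a ->
    exists c : hom Z Z', c \oc g = g' \oc b /\ shm a \oc h = h' \oc c.

(* TR4: octahedral axiom (Stacks Project, Def. 13.3.2) *)
Definition TR4 : Prop :=
  forall (X Y Z : obj) (f : hom X Y) (g : hom Y Z)
         (Q1 Q2 Q3 : obj)
         (p1 : hom Y Q1) (d1 : hom Q1 (sh X))
         (p2 : hom Z Q2) (d2 : hom Q2 (sh X))
         (p3 : hom Z Q3) (d3 : hom Q3 (sh Y)),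
    dist f p1 d1 -> dist (g \oc f) p2 d2 -> dist g p3 d3 ->
    exists (a : hom Q1 Q2) (b : hom Q2 Q3),
      [/\ dist a b (shm p1 \oc d3),
          a \oc p1 = p2 \oc g, d2 \oc a = d1,
          b \oc p2 = p3 & d3 \oc b = shm f \oc d2].

Definition triangulated_axioms : Prop :=
  [/\ preadditive_axioms, additive_axioms, shift_axioms, TR1 & [/\ TR2, TR3 & TR4]].

Definition monoidal_axioms : Prop :=
  [/\
      (forall A B : obj, tensm (idm A) (idm B) = idm (tens A B)),
      (forall (A A' A'' B B' B'' : obj) (f : hom A A') (f' : hom A' A'')
              (g : hom B B') (g' : hom B' B''),
         tensm (f' \oc f) (g' \oc g) = tensm f' g' \oc tensm f g),
      (forall (A A' B B' C C' : obj) (f : hom A A') (g : hom B B') (h : hom C C'),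
         assoc A' B' C' \oc tensm (tensm f g) h = tensm f (tensm g h) \oc assoc A B C)
    & [/\
      (forall (A A' : obj) (f : hom A A'), lunit A' \oc tensm (idm unit) f = f \oc lunit A),
      (forall (A A' : obj) (f : hom A A'), runit A' \oc tensm f (idm unit) = f \oc runit A),
      [/\ (forall A B C : obj, associ A B C \oc assoc A B C = idm _ /\ assoc A B C \oc associ A B C = idm _),
          (forall A : obj, luniti A \oc lunit A = idm _ /\ lunit A \oc luniti A = idm _)
        & (forall A : obj, runiti A \oc runit A = idm _ /\ runit A \oc runiti A = idm _)],
      (forall A B C D : obj,
         assoc A B (tens C D) \oc assoc (tens A B) C D
         = tensm (idm A) (assoc B C D) \oc assoc A (tens B C) D \oc tensm (assoc A B C) (idm D))
    &
      (forall A B : obj,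
         tensm (idm A) (lunit B) \oc assoc A unit B = tensm (runit A) (idm B))]].

Definition tensor_exact_axioms : Prop :=
  [/\ (forall (A A' B B' : obj) (f f' : hom A A') (g : hom B B'),
         tensm (f + f') g = tensm f g + tensm f' g),
      (forall (A A' B B' : obj) (f : hom A A') (g g' : hom B B'),
         tensm f (g + g') = tensm f g + tensm f g'),
      (forall A : obj, exists theta : forall B : obj, hom (tens A (sh B)) (sh (tens A B)),
         [/\ (forall B, is_iso (theta B)),
             (forall (B B' : obj) (f : hom B B'),
                theta B' \oc tensm (idm A) (shm f) = shm (tensm (idm A) f) \oc theta B)
           & (forall (X Y Z : obj) (f : hom X Y) (g : hom Y Z) (h : hom Z (sh X)),
                dist f g h ->
                dist (tensm (idm A) f) (tensm (idm A) g) (theta X \oc tensm (idm A) h))])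
    &
      (forall A : obj, exists theta : forall B : obj, hom (tens (sh B) A) (sh (tens B A)),
         [/\ (forall B, is_iso (theta B)),
             (forall (B B' : obj) (f : hom B B'),
                theta B' \oc tensm (shm f) (idm A) = shm (tensm f (idm A)) \oc theta B)
           & (forall (X Y Z : obj) (f : hom X Y) (g : hom Y Z) (h : hom Z (sh X)),
                dist f g h ->
                dist (tensm f (idm A)) (tensm g (idm A)) (theta X \oc tensm h (idm A)))])].

Definition is_MDC : Prop :=
  [/\ triangulated_axioms, monoidal_axioms & tensor_exact_axioms].

Definition dual_pair (L R : obj) : Prop :=
  exists (ev : hom (tens L R) unit) (coev : hom unit (tens R L)),
    runit R \oc tensm (idm R) ev \oc assoc R L R \oc tensm coev (idm R) \oc luniti R
      = idm R /\
    lunit L \oc tensm ev (idm L) \oc associ L R L \oc tensm (idm L) coev \oc runiti L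
      = idm L.

Definition left_dualizable (R : obj) : Prop := exists L, dual_pair L R.
Definition right_dualizable (L : obj) : Prop := exists R, dual_pair L R.

Definition thick_subcat (I : obj -> Prop) : Prop :=
  [/\ (forall Z : obj, is_zero_obj Z -> I Z),
      (forall (X Y : obj) (f : hom X Y), is_iso f -> I X -> I Y),
      (forall X : obj, I X <-> I (sh X)),
      (forall (X Y Z : obj) (f : hom X Y) (g : hom Y Z) (h : hom Z (sh X)),
         dist f g h -> [/\ (I X -> I Y -> I Z), (I X -> I Z -> I Y) & (I Y -> I Z -> I X)])
    & (forall X A B : obj, is_biproduct X A B -> I X -> I A)].

Definition thick_ideal (I : obj -> Prop) : Prop :=
  thick_subcat I /\ (forall A X : obj, I X -> I (tens A X) /\ I (tens X A)).

Definition thick_closure (S : obj -> Prop) (X : obj) : Prop :=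
  forall I, thick_subcat I -> (forall A, S A -> I A) -> I X.

Definition ideal_closure (S : obj -> Prop) (X : obj) : Prop :=
  forall I, thick_ideal I -> (forall A, S A -> I A) -> I X.

Definition generates (G : obj) : Prop := forall X : obj, thick_closure (fun A => A = G) X.

Definition fg_thick_ideal (I : obj -> Prop) : Prop :=
  exists (n : nat) (a : 'I_n -> obj),
    forall X : obj, I X <-> ideal_closure (fun A => exists i, A = a i) X.

Definition fg_ideals_DCC : Prop :=
  forall I : nat -> obj -> Prop,
    (forall n, fg_thick_ideal (I n)) ->
    (forall n X, I n.+1 X -> I n X) ->
    exists N, forall n, (N <= n)%N -> forall X, I N X -> I n X.

Definition prime_ideal (P : obj -> Prop) : Prop :=
  [/\ thick_ideal P, (exists X, ~ P X)
    & (forall I J, thick_ideal I -> thick_ideal J ->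
         (forall A B, I A -> J B -> P (tens A B)) ->
         (forall X, I X -> P X) \/ (forall X, J X -> P X))].

(* Points of Spc K are the prime ideals; a subset C of Spc K (a predicate on
   ideals, supported on primes) is closed iff it is an intersection
   \bigcap_{A in S} V(A), V(A) = {P | A \notin P}. *)
Definition Spc_closed (C : (obj -> Prop) -> Prop) : Prop :=
  (forall P, C P -> prime_ideal P) /\
  exists S : obj -> Prop,
    forall P, prime_ideal P -> (C P <-> forall A, S A -> ~ P A).

Definition Spc_noetherian : Prop :=
  forall C : nat -> (obj -> Prop) -> Prop,
    (forall n, Spc_closed (C n)) ->
    (forall n P, C n.+1 P -> C n P) ->
    exists N, forall n, (N <= n)%N -> forall P, C N P -> C n P.

End MDCDefs.

From Pilot Require Import Defs.
From mathcomp Require Import all_boot all_order all_algebra.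
From mathcomp Require Import boolp classical_sets.
Set Implicit Arguments. Unset Strict Implicit. Unset Printing Implicit Defensive.
Import GRing.Theory.
Local Open Scope ring_scope.
Local Open Scope classical_set_scope.

(* Dualizability makes every thick ideal semiprime ([B ⊗ K ⊗ B ⊆ I] forces [B ∈ I]),
   so a Zorn argument separates any object from a thick ideal by a prime, and the
   principal ideal [<b>] is determined by its support [supp b = {P | b ∉ P}].
   Finitely many generators can be summed into one, and as [G] generates,
   [supp ((A ⊗ G) ⊗ B) = supp A ∩ supp B] while [(A ⊗ G) ⊗ B ∈ <A>]. Hence chains
   of finitely generated ideals and chains of supports correspond; under the DCC a
   closed set [⋂_(A ∈ S) V(A)] is the support of an object [M] with minimal support
   containing it, so chains of closed sets are again chains of supports. *)

Lemma addr_id_eq0 (V : zmodType) (x : V) : x + x = x -> x = 0.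
Proof. by move=> /(congr1 (fun y => y - x)); rewrite addrK subrr. Qed.

Lemma dcc_minimal (T : Type) (le : T -> T -> Prop) (Phi : T -> Prop) (x0 : T) :
  (forall c : nat -> T, (forall n, le (c n.+1) (c n)) ->
     exists N, forall n, (N <= n)%N -> le (c N) (c n)) ->
  Phi x0 -> exists2 M, Phi M & forall B, Phi B -> le B M -> le M B.
Proof.
move=> dcc Phix0; apply: contrapT => nomin.
have step B : exists B', Phi B -> [/\ Phi B', le B' B & ~ le B B'].
  have [PB|PB] := EM (Phi B); last by exists B.
  have /existsNP [B' /not_implyP [PB' /not_implyP [B'B nBB']]] :
    ~ forall B', Phi B' -> le B' B -> le B B' by move=> H; apply: nomin; exists B.
  by exists B'.
have [g Hg] := choice step.
pose c n := iter n g x0.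
have Phic n : Phi (c n) by elim: n => [|n IH] //=; case: (Hg _ IH).
have [N HN] := dcc c (fun n => let: And3 _ le_next _ := Hg _ (Phic n) in le_next).
by case: (Hg _ (Phic N)) => _ _; apply; apply: (HN N.+1).
Qed.

(** * Triangulated categories *)

Section MonoidalTriangulated.
Variable K : MDCData.
Hypothesis HK : is_MDC K.
Local Notation obj := (obj K).
Local Notation hom := (@Defs.hom K).

Lemma compA (A B C D : obj) (h : hom C D) (g : hom B C) (f : hom A B) :
  h \oc (g \oc f) = (h \oc g) \oc f.
Proof. by case: HK => [[[H _ _ _ _] _ _ _ _] _ _]; apply: H. Qed.

Lemma comp1l (A B : obj) (f : hom A B) : idm B \oc f = f.
Proof. by case: HK => [[[_ H _ _ _] _ _ _ _] _ _]; apply: H. Qed.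

Lemma comp1r (A B : obj) (f : hom A B) : f \oc idm A = f.
Proof. by case: HK => [[[_ _ H _ _] _ _ _ _] _ _]; apply: H. Qed.

Lemma compDl (A B C : obj) (g g' : hom B C) (f : hom A B) :
  (g + g') \oc f = g \oc f + g' \oc f.
Proof. by case: HK => [[[_ _ _ H _] _ _ _ _] _ _]; apply: H. Qed.

Lemma compDr (A B C : obj) (g : hom B C) (f f' : hom A B) :
  g \oc (f + f') = g \oc f + g \oc f'.
Proof. by case: HK => [[[_ _ _ _ H] _ _ _ _] _ _]; apply: H. Qed.

Lemma comp0l (A B C : obj) (f : hom A B) : (0 : hom B C) \oc f = 0.
Proof. by apply: addr_id_eq0; rewrite -compDl addr0. Qed.

Lemma comp0r (A B C : obj) (g : hom B C) : g \oc (0 : hom A B) = 0.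
Proof. by apply: addr_id_eq0; rewrite -compDr addr0. Qed.

Lemma compNl (A B C : obj) (g : hom B C) (f : hom A B) : (- g) \oc f = - (g \oc f).
Proof. by apply/eqP; rewrite -addr_eq0 -compDl addNr comp0l. Qed.

Lemma compNr (A B C : obj) (g : hom B C) (f : hom A B) : g \oc (- f) = - (g \oc f).
Proof. by apply/eqP; rewrite -addr_eq0 -compDr addNr comp0r. Qed.

Lemma compBl (A B C : obj) (g g' : hom B C) (f : hom A B) :
  (g - g') \oc f = g \oc f - g' \oc f.
Proof. by rewrite compDl compNl. Qed.

Lemma compBr (A B C : obj) (g : hom B C) (f f' : hom A B) :
  g \oc (f - f') = g \oc f - g \oc f'.
Proof. by rewrite compDr compNr. Qed.

Lemma shm1 (A : obj) : shm (idm A) = idm (sh A).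
Proof. by case: HK => [[_ _ [H _ _ _ _] _ _] _ _]; apply: H. Qed.

Lemma shmC (A B C : obj) (g : hom B C) (f : hom A B) : shm (g \oc f) = shm g \oc shm f.
Proof. by case: HK => [[_ _ [_ H _ _ _] _ _] _ _]; apply: H. Qed.

Lemma shm_bij (A B : obj) : bijective (@shm K A B).
Proof. by case: HK => [[_ _ [_ _ _ H _] _ _] _ _]; apply: H. Qed.

Lemma dist_zero (X Z : obj) :
  is_zero_obj Z -> dist (idm X) (0 : hom X Z) (0 : hom Z (sh X)).
Proof. by case: HK => [[_ _ _ [H _ _] _] _ _]; apply: H. Qed.

Lemma dist_complete (X Y : obj) (f : hom X Y) :
  exists (Z : obj) (g : hom Y Z) (h : hom Z (sh X)), dist f g h.
Proof. by case: HK => [[_ _ _ [_ _ H] _] _ _]; apply: H. Qed.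

Lemma dist_rot (X Y Z : obj) (f : hom X Y) (g : hom Y Z) (h : hom Z (sh X)) :
  dist f g h <-> dist g h (- shm f).
Proof. by case: HK => [[_ _ _ _ [H _ _]] _ _]; apply: H. Qed.

Lemma dist_morph : TR3 K.
Proof. by case: HK => [[_ _ _ _ [_ H _]] _ _]. Qed.

Lemma zero_obj_exists : exists Z : obj, is_zero_obj Z.
Proof. by case: HK => [[_ [H _] _ _ _] _ _]. Qed.

Lemma biproduct_exists (A B : obj) : exists X, is_biproduct X A B.
Proof. by case: HK => [[_ [_ H] _ _ _] _ _]. Qed.

Lemma dist_comp0 (X Y Z : obj) (f : hom X Y) (g : hom Y Z) (h : hom Z (sh X)) :
  dist f g h -> g \oc f = 0.
Proof.
move=> Hd; have [Z0 HZ0] := zero_obj_exists.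
have [c [Hc _]] := dist_morph (dist_zero X HZ0) Hd (erefl (f \oc idm X)).
by rewrite -Hc comp0r.
Qed.

Lemma dist_shm_comp0 (X Y Z : obj) (f : hom X Y) (g : hom Y Z) (h : hom Z (sh X)) :
  dist f g h -> shm f \oc h = 0.
Proof. by move/dist_rot/dist_rot/dist_comp0/eqP; rewrite compNl oppr_eq0 => /eqP. Qed.

Lemma dist_lift (X Y Z W : obj) (f : hom X Y) (g : hom Y Z) (h : hom Z (sh X))
    (u : hom W Y) :
  dist f g h -> g \oc u = 0 -> exists v, u = f \oc v.
Proof.
move=> /dist_rot Hd gu; have [Z0 HZ0] := zero_obj_exists.
have /dist_rot H0 := dist_zero W HZ0.
have Hc : (0 : hom Z0 Z) \oc (0 : hom W Z0) = g \oc u by rewrite comp0l gu.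
have [c [_ Hc2]] := dist_morph H0 Hd Hc.
have [shm_inv _ shmK] := shm_bij W X; exists (shm_inv c).
apply: (bij_inj (shm_bij W Y)); move: Hc2.
by rewrite shm1 compNr comp1r compNl shmC shmK => /oppr_inj.
Qed.

Definition biprod_maps (X A B : obj)
    (i1 : hom A X) (p1 : hom X A) (i2 : hom B X) (p2 : hom X B) : Prop :=
  [/\ p1 \oc i1 = idm A, p2 \oc i2 = idm B, p1 \oc i2 = 0, p2 \oc i1 = 0
     & i1 \oc p1 + i2 \oc p2 = idm X].

Lemma biproduct_sym (X A B : obj) : is_biproduct X A B -> is_biproduct X B A.
Proof.
move=> [i1 [p1 [i2 [p2 [H1 H2 H3 H4 H5]]]]].
by exists i2, p2, i1, p1; split => //; rewrite addrC.
Qed.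

Lemma split_mono_biprod (R Y : obj) (s : hom R Y) (r : hom Y R) :
  r \oc s = idm R -> exists (C : obj) (g : hom Y C) (h : hom C (sh R)) (t : hom C Y),
    dist s g h /\ biprod_maps s r t g.
Proof.
move=> rs; have [C [g [h Hd]]] := dist_complete s.
have gs := dist_comp0 Hd.
have h0 : h = 0.
  by rewrite -(comp1l h) -shm1 -rs shmC -compA (dist_shm_comp0 Hd) comp0r.
have [t0 gt0] : exists t0, idm C = g \oc t0.
  by apply: (dist_lift (proj1 (dist_rot s g h) Hd)); rewrite h0 comp0l.
pose t := t0 - s \oc (r \oc t0).
have gt : g \oc t = idm C by rewrite compBr compA gs comp0l subr0 gt0.
have rt : r \oc t = 0 by rewrite compBr compA rs comp1l subrr.
pose u := idm Y - s \oc r - t \oc g.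
have gu : g \oc u = 0.
  by rewrite !compBr comp1r compA gs comp0l compA gt comp1l subr0 subrr.
have ru : r \oc u = 0.
  by rewrite !compBr comp1r compA rs comp1l compA rt comp0l subrr subr0.
have [v uv] := dist_lift Hd gu.
have v0 : v = 0 by rewrite -(comp1l v) -rs -compA -uv ru.
exists C, g, h, t; split => //; split => //.
by apply/eqP; rewrite eq_sym -subr_eq0 opprD addrA -/u uv v0 comp0r.
Qed.

Lemma is_iso_id (A : obj) : is_iso (idm A).
Proof. by exists (idm A); rewrite comp1l. Qed.

Lemma is_iso_comp (A B C : obj) (g : hom B C) (f : hom A B) :
  is_iso f -> is_iso g -> is_iso (g \oc f).
Proof.
move=> [f' [f1 f2]] [g' [g1 g2]]; exists (f' \oc g'); split.
  by rewrite compA -(compA f' g') g1 comp1r f1.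
by rewrite compA -(compA g f) f2 comp1r g2.
Qed.

Lemma biprod_complement_iso (X A B C : obj) (i1 : hom A X) (p1 : hom X A)
    (i2 : hom B X) (p2 : hom X B) (t : hom C X) (g : hom X C) :
  biprod_maps i1 p1 i2 p2 -> biprod_maps i1 p1 t g -> is_iso (g \oc i2).
Proof.
rewrite /biprod_maps => -[_ p2i2 _ p2i1 E] [_ gt _ gi1 E'].
have ip : i2 \oc p2 = idm X - i1 \oc p1 by rewrite -E addrC addKr.
have tg : t \oc g = idm X - i1 \oc p1 by rewrite -E' addrC addKr.
exists (p2 \oc t); split.
  by rewrite compA -(compA p2 t g) tg compBr comp1r compBl p2i2 compA p2i1 !comp0l subr0.
by rewrite compA -(compA g i2 p2) ip compBr comp1r compBl gt compA gi1 !comp0l subr0.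
Qed.

(** * Thick subcategories and thick ideals *)

Section ThickSubcategory.
Variable I : set obj.
Hypothesis HI : thick_subcat I.

Lemma thick_zero (Z : obj) : is_zero_obj Z -> I Z.
Proof. by case: HI => H _ _ _ _; apply: H. Qed.

Lemma thick_iso (X Y : obj) (f : hom X Y) : is_iso f -> I X -> I Y.
Proof. by case: HI => _ H _ _ _; apply: H. Qed.

Lemma thick_isoV (X Y : obj) (f : hom X Y) : is_iso f -> I Y -> I X.
Proof. by move=> [g [g1 g2]]; apply: (@thick_iso _ _ g); exists f. Qed.

Lemma thick_shift (X : obj) : I X <-> I (sh X).
Proof. by case: HI => _ _ H _ _; apply: H. Qed.

Lemma thick_dist (X Y Z : obj) (f : hom X Y) (g : hom Y Z) (h : hom Z (sh X)) :
  dist f g h -> [/\ (I X -> I Y -> I Z), (I X -> I Z -> I Y) & (I Y -> I Z -> I X)].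
Proof. by case: HI => _ _ _ H _; apply: H. Qed.

Lemma thick_summand (X A B : obj) : is_biproduct X A B -> I X -> I A.
Proof. by case: HI => _ _ _ _ H; apply: H. Qed.

Lemma thick_retract (R Y : obj) (s : hom R Y) (r : hom Y R) :
  r \oc s = idm R -> I Y -> I R.
Proof.
move=> rs; have [C [g [h [t [_ Hst]]]]] := split_mono_biprod rs.
by apply: thick_summand; exists s, r, t, g.
Qed.

Lemma thick_biproduct (X A B : obj) : is_biproduct X A B -> I A -> I B -> I X.
Proof.
move=> [i1 [p1 [i2 [p2 Hb]]]] IA IB.
have [p1i1 _ _ _ _] := Hb.
have [C [g [h [t [Hd Ht]]]]] := split_mono_biprod p1i1.
have IC : I C := thick_iso (biprod_complement_iso Hb Ht) IB.
by case: (thick_dist Hd) => _ + _; apply.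
Qed.

End ThickSubcategory.

Lemma thick_ext (I J : set obj) : (forall X, I X <-> J X) -> thick_subcat I -> thick_subcat J.
Proof.
move=> E [H1 H2 H3 H4 H5]; split.
- by move=> Z HZ; apply/E; apply: H1.
- by move=> X Y f Hf /E HX; apply/E; apply: H2 Hf HX.
- by move=> X; rewrite -!E.
- move=> X Y Z f g h Hd; case: (H4 _ _ _ _ _ _ Hd) => a b c.
  by split=> /E ? /E ?; apply/E; [apply: a | apply: b | apply: c].
- by move=> X A B Hb /E HX; apply/E; apply: H5 Hb HX.
Qed.

Lemma thick_bigcap (T : Type) (J : T -> set obj) :
  (forall t, thick_subcat (J t)) -> thick_subcat (fun X => forall t, J t X).
Proof.
move=> HJ; split.
- by move=> Z HZ t; apply: thick_zero (HJ t) _ HZ.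
- by move=> X Y f Hf HX t; exact: (thick_iso (HJ t) Hf (HX t)).
- by move=> X; split=> H t; apply/(thick_shift (HJ t) X); apply: H.
- move=> X Y Z f g h Hd; split=> H1 H2 t; case: (thick_dist (HJ t) Hd) => a b c;
    [apply: a | apply: b | apply: c]; by [apply: H1 | apply: H2].
- by move=> X A B Hb HX t; exact: (thick_summand (HJ t) Hb (HX t)).
Qed.

Section ThickIdeal.
Variable I : set obj.
Hypothesis HI : thick_ideal I.

Lemma ideal_thick : thick_subcat I.
Proof. by case: HI. Qed.

Lemma ideal_l (A X : obj) : I X -> I (tens A X).
Proof. by case: HI => _ H HX; case: (H A X HX). Qed.

Lemma ideal_r (A X : obj) : I X -> I (tens X A).
Proof. by case: HI => _ H HX; case: (H A X HX). Qed.

Lemma ideal_iso (X Y : obj) (f : hom X Y) : is_iso f -> I X -> I Y.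
Proof. exact: (thick_iso ideal_thick). Qed.

Lemma ideal_isoV (X Y : obj) (f : hom X Y) : is_iso f -> I Y -> I X.
Proof. exact: (thick_isoV ideal_thick). Qed.

End ThickIdeal.

Lemma ideal_ext (I J : set obj) : (forall X, I X <-> J X) -> thick_ideal I -> thick_ideal J.
Proof.
move=> E [HI Htens]; split; first exact: thick_ext E HI.
by move=> A X /E HX; case: (Htens A X HX); rewrite !E.
Qed.

Lemma ideal_closure_ideal (S : set obj) : thick_ideal (ideal_closure S).
Proof.
split.
  pose T := {I : set obj | thick_ideal I /\ S `<=` I}.
  apply: (@thick_ext (fun X => forall I : T, sval I X)).
    move=> X; split=> [H I HI HS | H [I] /= [HI HS]]; last exact: H.
    exact: (H (exist _ I (conj HI HS))).
  by apply: thick_bigcap => I; apply: ideal_thick (proj1 (svalP I)).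
by move=> A X HX; split=> I HI HS; [apply: ideal_l | apply: ideal_r]; apply: HX.
Qed.

Lemma sub_ideal_closure (S : set obj) : S `<=` ideal_closure S.
Proof. by move=> A SA I _; apply. Qed.

Lemma ideal_closure_min (S I : set obj) :
  thick_ideal I -> S `<=` I -> ideal_closure S `<=` I.
Proof. by move=> HI HS X; apply. Qed.

Lemma thick_ideal_directed_union (T : Type) (t0 : T) (J : T -> set obj) :
  (forall t, thick_ideal (J t)) -> (forall s t, exists u, J s `<=` J u /\ J t `<=` J u) ->
  thick_ideal (fun X => exists t, J t X).
Proof.
move=> HJ Jdir.
have common X Y : (exists s, J s X) -> (exists t, J t Y) -> exists u, J u X /\ J u Y.
  by move=> [s Xs] [t Yt]; have [u [su tu]] := Jdir s t; exists u; split; auto.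
split; first split.
- by move=> Z HZ; exists t0; apply: thick_zero (ideal_thick (HJ t0)) _ HZ.
- by move=> X Y f Hf [t Xt]; exists t; exact: (ideal_iso (HJ t) Hf Xt).
- by move=> X; split=> -[t Xt]; exists t; apply/(thick_shift (ideal_thick (HJ t)) X).
- move=> X Y Z f g h Hd; split=> H1 H2; have [u [J1 J2]] := common _ _ H1 H2; exists u;
    case: (thick_dist (ideal_thick (HJ u)) Hd) => a b c; [apply: a | apply: b | apply: c] => //.
- by move=> X A B Hb [t Xt]; exists t; exact: (thick_summand (ideal_thick (HJ t)) Hb Xt).
- by move=> A X [t Xt]; split; exists t; [apply: ideal_l | apply: ideal_r].
Qed.

(** * The tensor product *)

Lemma tensm11 (A B : obj) : tensm (idm A) (idm B) = idm (tens A B).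
Proof. by case: HK => [_ [H _ _ _] _]; apply: H. Qed.

Lemma tensm_comp (A A' A'' B B' B'' : obj) (f : hom A A') (f' : hom A' A'')
    (g : hom B B') (g' : hom B' B'') :
  tensm (f' \oc f) (g' \oc g) = tensm f' g' \oc tensm f g.
Proof. by case: HK => [_ [_ H _ _] _]; apply: H. Qed.

Lemma tensmDl (A A' B B' : obj) (f f' : hom A A') (g : hom B B') :
  tensm (f + f') g = tensm f g + tensm f' g.
Proof. by case: HK => [_ _ [H _ _ _]]; apply: H. Qed.

Lemma tensmDr (A A' B B' : obj) (f : hom A A') (g g' : hom B B') :
  tensm f (g + g') = tensm f g + tensm f g'.
Proof. by case: HK => [_ _ [_ H _ _]]; apply: H. Qed.

Lemma assoc_iso (A B C : obj) : is_iso (assoc A B C).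
Proof. by case: HK => [_ [_ _ _ [_ _ [H _ _] _ _]] _]; exists (associ A B C); apply: H. Qed.

Lemma lunit_iso (A : obj) : is_iso (lunit A).
Proof. by case: HK => [_ [_ _ _ [_ _ [_ H _] _ _]] _]; exists (luniti A); apply: H. Qed.

Lemma runiti_iso (A : obj) : is_iso (runiti A).
Proof.
case: HK => [_ [_ _ _ [_ _ [_ _ H] _ _]] _]; exists (runit A).
by case: (H A).
Qed.

Lemma tensm_iso (A A' B B' : obj) (f : hom A A') (g : hom B B') :
  is_iso f -> is_iso g -> is_iso (tensm f g).
Proof.
move=> [f' [f1 f2]] [g' [g1 g2]]; exists (tensm f' g').
by rewrite -!tensm_comp f1 g1 f2 g2 !tensm11.
Qed.

Definition exact_functor (F : obj -> obj) (Fm : forall A B, hom A B -> hom (F A) (F B)) :=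
  [/\ (forall A, Fm _ _ (idm A) = idm (F A)),
      (forall (A B C : obj) (g : hom B C) (f : hom A B),
          Fm _ _ (g \oc f) = Fm _ _ g \oc Fm _ _ f),
      (forall (A B : obj) (f f' : hom A B), Fm _ _ (f + f') = Fm _ _ f + Fm _ _ f')
    & exists theta : forall B, hom (F (sh B)) (sh (F B)),
        (forall B, is_iso (theta B)) /\
        (forall (X Y Z : obj) (f : hom X Y) (g : hom Y Z) (h : hom Z (sh X)),
           dist f g h -> dist (Fm _ _ f) (Fm _ _ g) (theta X \oc Fm _ _ h))].
Arguments exact_functor : clear implicits.

Lemma exact_functor_comp F Fm F' Fm' : exact_functor F Fm -> exact_functor F' Fm' ->
  exact_functor (fun X => F' (F X)) (fun A B f => Fm' _ _ (Fm A B f)).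
Proof.
move=> [F1 FC FD [th [th_iso Fd]]] [F1' FC' FD' [th' [th_iso' Fd']]]; split.
- by move=> A; rewrite F1 F1'.
- by move=> A B C g f; rewrite FC FC'.
- by move=> A B f f'; rewrite FD FD'.
exists (fun B => th' (F B) \oc Fm' _ _ (th B)); split.
  move=> B; apply: is_iso_comp (th_iso' _); have [g [g1 g2]] := th_iso B.
  by exists (Fm' _ _ g); rewrite -!FC' g1 g2 !F1'.
move=> X Y Z f g h /Fd/Fd'; by rewrite FC' compA.
Qed.

Lemma exact_tens_l (A : obj) : exact_functor (tens A) (fun X Y f => tensm (idm A) f).
Proof.
split.
- by move=> B; rewrite tensm11.
- by move=> B C D g f; rewrite -tensm_comp comp1l.
- by move=> B C f f'; rewrite tensmDr.
by case: HK => [_ _ [_ _ H _]]; have [th [th_iso _ Hd]] := H A; exists th.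
Qed.

Lemma exact_tens_r (A : obj) : exact_functor (tens^~ A) (fun X Y f => tensm f (idm A)).
Proof.
split.
- by move=> B; rewrite tensm11.
- by move=> B C D g f; rewrite -tensm_comp comp1l.
- by move=> B C f f'; rewrite tensmDl.
by case: HK => [_ _ [_ _ _ H]]; have [th [th_iso _ Hd]] := H A; exists th.
Qed.

Lemma thick_preimage (I : set obj) F Fm :
  thick_subcat I -> exact_functor F Fm -> thick_subcat (fun X => I (F X)).
Proof.
move=> HI [F1 FC FD [th [th_iso Fd]]].
have F0 A B : Fm A B 0 = 0 by apply: addr_id_eq0; rewrite -FD addr0.
have Fiso A B (f : hom A B) : is_iso f -> is_iso (Fm _ _ f).
  by move=> [g [g1 g2]]; exists (Fm _ _ g); rewrite -!FC g1 g2 !F1.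
split.
- by move=> Z HZ; apply: (thick_zero HI); rewrite /is_zero_obj -F1 HZ F0.
- by move=> X Y f /Fiso Hf; exact: (thick_iso HI Hf).
- by move=> X; rewrite (thick_shift HI (F X)); split;
    [exact: (thick_isoV HI (th_iso X)) | exact: (thick_iso HI (th_iso X))].
- by move=> X Y Z f g h /Fd /(thick_dist HI).
- move=> X A B [i1 [p1 [i2 [p2 [E1 E2 E3 E4 E5]]]]]; apply: (thick_summand HI).
  exists (Fm _ _ i1), (Fm _ _ p1), (Fm _ _ i2), (Fm _ _ p2).
  by split; rewrite -?FC -?FD ?E1 ?E2 ?E3 ?E4 ?E5 ?F1 ?F0.
Qed.

Section Sandwich.
Variable P : set obj.
Hypothesis HP : thick_ideal P.

Lemma sandwich_closure_l (S : set obj) (y : obj) :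
  S `<=` (fun a => forall W, P (tens (tens a W) y)) ->
  ideal_closure S `<=` (fun x => forall W, P (tens (tens x W) y)).
Proof.
apply: ideal_closure_min; split.
  apply: thick_bigcap => W; apply: (thick_preimage (ideal_thick HP)).
  exact: exact_functor_comp (exact_tens_r W) (exact_tens_r y).
move=> V x Hx; split=> W.
  apply: (ideal_isoV HP (tensm_iso (assoc_iso V x W) (is_iso_id y))).
  exact: (ideal_isoV HP (assoc_iso _ _ _) (ideal_l HP _ (Hx W))).
exact: (ideal_isoV HP (tensm_iso (assoc_iso x V W) (is_iso_id y)) (Hx _)).
Qed.

Lemma sandwich_closure_r (S : set obj) (x : obj) :
  S `<=` (fun b => forall W, P (tens (tens x W) b)) ->
  ideal_closure S `<=` (fun y => forall W, P (tens (tens x W) y)).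
Proof.
apply: ideal_closure_min; split.
  by apply: thick_bigcap => W; apply: thick_preimage (ideal_thick HP) (exact_tens_l _).
move=> V y Hy; split=> W.
  apply: (ideal_iso HP (assoc_iso _ V y)).
  exact: (ideal_isoV HP (tensm_iso (assoc_iso x W V) (is_iso_id y)) (Hy _)).
exact: (ideal_iso HP (assoc_iso _ y V) (ideal_r HP _ (Hy W))).
Qed.

Lemma ideal_closure_sandwich (S1 S2 : set obj) :
  (forall a b W, S1 a -> S2 b -> P (tens (tens a W) b)) ->
  forall x y W, ideal_closure S1 x -> ideal_closure S2 y -> P (tens (tens x W) y).
Proof.
move=> Hab x y W Hx Hy; apply: (sandwich_closure_r _ Hy) => b S2b W'.
by apply: (sandwich_closure_l _ Hx) => a S1a W''; apply: Hab.
Qed.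

End Sandwich.

(** * Prime ideals *)

Definition ideals_semiprime : Prop :=
  forall (I : set obj) (B : obj), thick_ideal I -> (forall X, I (tens (tens B X) B)) -> I B.

(* The zig-zag identities make [A] a retract of [(A ⊗ D) ⊗ A] for a dual [D] of [A]. *)
Lemma dualizable_ideals_semiprime :
  (forall X : obj, left_dualizable X) \/ (forall X : obj, right_dualizable X) ->
  ideals_semiprime.
Proof.
move=> [Hl|Hr] I A HI HA.
  have [L [ev [coev [zigzag _]]]] := Hl A.
  apply: (thick_retract (ideal_thick HI) (s := tensm coev (idm A) \oc luniti A)
     (r := runit A \oc tensm (idm A) ev \oc assoc A L A)); last exact: HA.
  by rewrite compA.
have [R [ev [coev [_ zigzag]]]] := Hr A.
apply: (thick_retract (ideal_thick HI) (s := associ A R A \oc tensm (idm A) coev \oc runiti A)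
   (r := lunit A \oc tensm ev (idm A))); last exact: HA.
by rewrite !compA.
Qed.

Lemma ideal_unit_full (P : set obj) : thick_ideal P -> P unit -> forall X, P X.
Proof. by move=> HP Pu X; apply: (ideal_iso HP (lunit_iso X)); apply: ideal_r. Qed.

Lemma prime_ideal_thick (P : set obj) : prime_ideal P -> thick_ideal P.
Proof. by case. Qed.

Lemma prime_not_unit (P : set obj) : prime_ideal P -> ~ P unit.
Proof. by move=> [HP [X PX] _] /(ideal_unit_full HP)/(_ X). Qed.

(* If [X, Y ∉ M], the ideals generated by [M] together with [X], resp. [Y], meet the
   sequence, hence share some [a n]; then [a n.+1 ∈ <M, X> ⊗ K ⊗ <M, Y> ⊆ M]. *)
Lemma maximal_avoiding_prime (M : set obj) (a w : nat -> obj) :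
  (forall k, a k.+1 = tens (tens (a k) (w k)) (a k)) ->
  thick_ideal M -> (forall k, ~ M (a k)) ->
  (forall Q, thick_ideal Q -> M `<=` Q -> (forall k, ~ Q (a k)) -> Q `<=` M) ->
  prime_ideal M.
Proof.
move=> aS HM Ma Mmax.
have a_up Q k d : thick_ideal Q -> Q (a k) -> Q (a (k + d)%N).
  move=> HQ Qk; elim: d => [|d IH]; first by rewrite addn0.
  by rewrite addnS aS; exact: (ideal_r HQ _ (ideal_r HQ _ IH)).
have meets W : ~ M W -> exists k, ideal_closure (M `|` [set W]) (a k).
  move=> MW; apply: contrapT => /forallNP na; apply: MW.
  apply: (Mmax _ (ideal_closure_ideal _) _ na); last by apply: sub_ideal_closure; right.
  by move=> X MX; apply: sub_ideal_closure; left.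
split=> //; first by exists (a 0).
move=> I J HI HJ IJM; have [IM|nIM] := EM (I `<=` M); [by left | right].
move=> Y JY; apply: contrapT => MY; apply: nIM => X IX; apply: contrapT => MX.
have [k Hk] := meets X MX; have [l Hl] := meets Y MY.
apply: (Ma (k + l).+1); rewrite aS.
apply: (ideal_closure_sandwich HM (S1 := M `|` [set X]) (S2 := M `|` [set Y])).
- move=> p q W [Mp|->] [Mq|->]; try exact: (ideal_l HM _ Mq);
    try exact: (ideal_r HM _ (ideal_r HM _ Mp)).
  exact: (IJM _ _ (ideal_r HI _ IX) JY).
- exact: (a_up _ _ _ (ideal_closure_ideal _) Hk).
- by rewrite addnC; exact: (a_up _ _ _ (ideal_closure_ideal _) Hl).
Qed.

Lemma thick_ideal_chain_union (I : set obj) (F : set (set obj)) :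
  thick_ideal I -> (forall J, F J -> thick_ideal (I `|` J)) -> total_on F subset ->
  thick_ideal (I `|` \bigcup_(J in F) J).
Proof.
move=> HI HF Fchain.
pose Js (t : option {J | F J}) := if t is Some J then I `|` sval J else I.
apply: (@ideal_ext (fun X => exists t, Js t X)).
  move=> X; split.
    case=> -[[J FJ]|] /= JX; last by left.
    by case: JX => [IX|JX]; [left | right; exists J].
  case=> [IX|[J FJ JX]]; first by exists None.
  by exists (Some (exist _ J FJ)); right.
apply: (thick_ideal_directed_union None); first by case=> [[J FJ]|] //=; apply: HF.
have up (J : {J | F J}) t : Js t `<=` Js (Some J) \/ Js (Some J) `<=` Js t.
  case: t => [J'|] /=; last by left; apply: subsetUl.
  by case: (Fchain _ _ (svalP J) (svalP J')) => ?; [right | left]; apply: setUS.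
move=> [J|] [J'|].
- by case: (up J (Some J')) => ?; [exists (Some J) | exists (Some J')]; split.
- by exists (Some J); split; last apply: subsetUl.
- by exists (Some J'); split; first apply: subsetUl.
- by exists None; split.
Qed.

Lemma exists_maximal_avoiding (I : set obj) (a : nat -> obj) :
  thick_ideal I -> (forall k, ~ I (a k)) ->
  exists M, [/\ thick_ideal M, I `<=` M, (forall k, ~ M (a k)) &
    forall Q, thick_ideal Q -> M `<=` Q -> (forall k, ~ Q (a k)) -> Q `<=` M].
Proof.
move=> HI Ia.
(* Zorn runs over the [J] with [I `|` J] an ideal, since [Zorn_bigcup] also
   requires the union of the empty chain to qualify. *)
pose avoiding J := thick_ideal (I `|` J) /\ forall k, ~ J (a k).
have [A [[HA Aa] Amax]] : exists A, avoiding A /\ forall B, A `<` B -> ~ avoiding B.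
  apply: Zorn_bigcup => F Favoid Fchain; split.
    by apply: thick_ideal_chain_union => // J /Favoid [].
  by move=> k [J FJ Jk]; apply: (Favoid J FJ).2 Jk.
exists (I `|` A); split=> //; first by move=> k [Ik|Ak]; [apply: (Ia k) | apply: (Aa k)].
move=> Q HQ IAQ Qa X QX; right; move: X QX; apply: contrapT => QA.
apply: (Amax Q); first by split=> [X AX|//]; apply: IAQ; right.
split=> //; apply: (ideal_ext _ HQ) => X; split=> [QX|[IX|//]]; first by right.
by apply: IAQ; left.
Qed.

Lemma prime_avoiding (I : set obj) (A : obj) :
  ideals_semiprime -> thick_ideal I -> ~ I A ->
  exists P, [/\ prime_ideal P, I `<=` P & ~ P A].
Proof.
move=> semi HI IA.
have step B : exists X, ~ I B -> ~ I (tens (tens B X) B).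
  have [IB|IB] := EM (I B); first by exists B.
  have /existsNP [X IBXB] : ~ forall X, I (tens (tens B X) B) by move/(semi _ _ HI).
  by exists X.
have [w Hw] := choice step.
pose a n := iter n (fun B => tens (tens B (w B)) B) A.
have Ia k : ~ I (a k) by elim: k => [|k IH] //=; apply: Hw.
have [M [HM IM Ma Mmax]] := exists_maximal_avoiding HI Ia.
exists M; split=> //; last exact: (Ma 0).
exact: (@maximal_avoiding_prime _ a (fun k => w (a k))).
Qed.

(** * Principal ideals and supports *)

Lemma thick_family_sum (n : nat) (a : 'I_n -> obj) :
  exists b, forall Q, thick_subcat Q -> (Q b <-> forall i, Q (a i)).
Proof.
elim: n a => [|n IH] a.
  have [Z HZ] := zero_obj_exists; exists Z => Q HQ.
  by split=> _; [case | exact: (thick_zero HQ HZ)].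
have [b' Hb'] := IH (fun i => a (lift ord0 i)).
have [X HX] := biproduct_exists (a ord0) b'; exists X => Q HQ; split.
  move=> QX i; case: (unliftP ord0 i) => [j ->|->]; last exact: (thick_summand HQ HX QX).
  exact: ((Hb' Q HQ).1 (thick_summand HQ (biproduct_sym HX) QX) j).
move=> Qa; apply: (thick_biproduct HQ HX (Qa ord0)).
by apply/(Hb' Q HQ) => j; apply: Qa.
Qed.

Definition principal_ideal (B : obj) : set obj := ideal_closure [set B].

Lemma principal_ideal_self (B : obj) : principal_ideal B B.
Proof. exact: sub_ideal_closure. Qed.
Arguments principal_ideal_self : clear implicits.

Lemma principal_ideal_min (I : set obj) (B : obj) :
  thick_ideal I -> I B -> principal_ideal B `<=` I.
Proof. by move=> HI IB; apply: ideal_closure_min HI _ => _ ->. Qed.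

Lemma principal_ideal_fg (B : obj) : fg_thick_ideal (principal_ideal B).
Proof.
exists 1%N, (fun _ => B) => X; split; apply: ideal_closure_min (ideal_closure_ideal _) _ X.
  by move=> _ ->; apply: sub_ideal_closure; exists ord0.
by move=> _ [_ ->]; apply: principal_ideal_self.
Qed.

Lemma fg_ideal_principal (I : set obj) :
  fg_thick_ideal I -> exists b, forall X, I X <-> principal_ideal b X.
Proof.
move=> [n [a HI]]; have [b Hb] := thick_family_sum a; exists b => X; rewrite HI.
split; apply: ideal_closure_min (ideal_closure_ideal _) _ X.
  move=> _ [i ->]; apply: (Hb _ (ideal_thick (ideal_closure_ideal _))).1 i.
  exact: principal_ideal_self.
move=> _ ->; apply/(Hb _ (ideal_thick (ideal_closure_ideal _))) => i.
by apply: sub_ideal_closure; exists i.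
Qed.

Definition supp (B : obj) : set (set obj) := fun P => prime_ideal P /\ ~ P B.

Lemma supp_closed (B : obj) : Spc_closed (supp B).
Proof.
split=> [P []//|]; exists [set B] => P HP.
by split=> [[_ PB] _ -> | PB]; last split=> //; apply: PB.
Qed.

Lemma supp_unit (P : set obj) : prime_ideal P -> supp unit P.
Proof. by move=> HP; split=> //; apply: prime_not_unit. Qed.

Lemma principal_supp_subset (a b : obj) : principal_ideal b a -> supp a `<=` supp b.
Proof.
move=> ba P [HP Pa]; split=> // Pb; apply: Pa.
exact: principal_ideal_min (prime_ideal_thick HP) Pb _ ba.
Qed.

Lemma supp_subset_principal (a b : obj) :
  ideals_semiprime -> supp a `<=` supp b -> principal_ideal b a.
Proof.
move=> semi sab; apply: contrapT => nba.
have [P [HP bP Pa]] := prime_avoiding semi (ideal_closure_ideal _) nba.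
by have [_] := sab P (conj HP Pa); apply; apply: bP; apply: principal_ideal_self.
Qed.

Section Generator.
Variable G : obj.
Hypothesis HG : generates G.

Lemma prime_tens_generator (P : set obj) (A B : obj) :
  prime_ideal P -> ~ P A -> ~ P B -> ~ P (tens (tens A G) B).
Proof.
move=> [HP _ Hprime] PA PB PAGB.
have PAZB Z : P (tens (tens A Z) B).
  apply: (@HG Z (fun Z => P (tens (tens A Z) B))); last by move=> _ ->.
  exact: thick_preimage (ideal_thick HP) (exact_functor_comp (exact_tens_l A) (exact_tens_r B)).
have PAB x y : ideal_closure [set A] x -> ideal_closure [set B] y -> P (tens x y).
  move=> Ax By; apply: (ideal_isoV HP (tensm_iso (runiti_iso x) (is_iso_id y))).
  by apply: (ideal_closure_sandwich HP _ unit Ax By) => _ _ W -> ->.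
have [] := Hprime _ _ (ideal_closure_ideal _) (ideal_closure_ideal _) PAB.
  by move=> /(_ A (sub_ideal_closure (erefl A))).
by move=> /(_ B (sub_ideal_closure (erefl B))).
Qed.

Lemma supp_tens_generator (A B : obj) (P : set obj) :
  supp (tens (tens A G) B) P <-> supp A P /\ supp B P.
Proof.
split=> [[HP PAGB] | [[HP PA] [_ PB]]]; last first.
  by split=> //; apply: prime_tens_generator.
have HPt := prime_ideal_thick HP.
by split; split=> // PX; apply: PAGB;
  [exact: (ideal_r HPt _ (ideal_r HPt _ PX)) | exact: (ideal_l HPt _ PX)].
Qed.

Hypothesis Hdcc : fg_ideals_DCC K.

(* [D n := B 0 ⊗ G ⊗ B 1 ⊗ ... ⊗ G ⊗ B n] has support [supp (B n)] and generates
   a descending chain of principal ideals. *)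
Lemma supp_chain_stable (B : nat -> obj) :
  (forall n, supp (B n.+1) `<=` supp (B n)) ->
  exists N, forall n, (N <= n)%N -> supp (B N) `<=` supp (B n).
Proof.
move=> Bdesc.
pose D := fix D n := if n is k.+1 then tens (tens (D k) G) (B k.+1) else B 0.
have suppD n P : supp (D n) P <-> supp (B n) P.
  elim: n P => [//|n IH] P /=; rewrite supp_tens_generator IH.
  by split=> [[]//|BP]; split=> //; apply: Bdesc.
have Ddesc n : principal_ideal (D n.+1) `<=` principal_ideal (D n).
  have HD := ideal_closure_ideal [set D n].
  apply: (principal_ideal_min HD).
  exact: (ideal_r HD (B n.+1) (ideal_r HD G (principal_ideal_self (D n)))).
have [N HN] := Hdcc (fun n => principal_ideal_fg (D n)) Ddesc.
exists N => n Nn P /suppD /(principal_supp_subset (HN n Nn _ (principal_ideal_self _))).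
by move/suppD.
Qed.

(* A support [supp M] minimal above [C] is contained in [C]: otherwise cutting it
   down by some [supp A], [A] in the defining family of [C], would make it smaller. *)
Lemma Spc_closed_eq_supp (C : set (set obj)) :
  Spc_closed C -> exists B, forall P, C P <-> supp B P.
Proof.
move=> [Cprime [S HS]].
have [M CM Mmin] := dcc_minimal (le := fun B B' => supp B `<=` supp B')
  (Phi := fun B => C `<=` supp B) supp_chain_stable (fun P CP => supp_unit (Cprime P CP)).
exists M => P; split; first exact: CM.
move=> [HP PM]; apply/(HS P HP) => A SA PA.
have CM' : C `<=` supp (tens (tens M G) A).
  move=> Q CQ; apply/supp_tens_generator; split; first exact: CM.
  by split; [exact: Cprime | exact: (HS Q (Cprime Q CQ)).1 CQ A SA].
have M'M : supp (tens (tens M G) A) `<=` supp M by move=> Q /supp_tens_generator [].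
have := Mmin _ CM' M'M P (conj HP PM).
by move=> /supp_tens_generator [_ []].
Qed.

End Generator.

End MonoidalTriangulated.

Theorem mainTheorem16 (K : MDCData) (HK : is_MDC K) (G : obj K) :
  generates G ->
  ((forall X : obj K, left_dualizable X) \/ (forall X : obj K, right_dualizable X)) ->
  (Spc_noetherian K <-> fg_ideals_DCC K).
Proof.
move=> HG /(dualizable_ideals_semiprime HK) semi; split.
- move=> Hnoeth I Ifg Idesc.
  have [b Hb] := choice (fun n => fg_ideal_principal HK (Ifg n)).
  have [|N HN] := Hnoeth (fun n => supp (b n)) (fun n => supp_closed (b n)).
    move=> n; apply: principal_supp_subset; apply/Hb/Idesc/Hb.
    exact: principal_ideal_self.
  exists N => n Nn X /Hb bNX; apply/Hb.
  apply: (principal_ideal_min (ideal_closure_ideal _) _ bNX).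
  exact: (supp_subset_principal HK semi (HN n Nn)).
- move=> Hdcc C Cclosed Cdesc.
  have [B HB] := choice (fun n => Spc_closed_eq_supp HK HG Hdcc (Cclosed n)).
  have [|N HN] := supp_chain_stable HK HG Hdcc (B := B); first by move=> n P /HB /Cdesc /HB.
  by exists N => n Nn P /HB /(HN n Nn) /HB.
Qed.
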